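(* Let $\mathbf{x}_i\in\chi$ be a constellation point whose Voronoi region $\mathcal{D}_{i,\mathrm{ML}}$ is unbounded. Let $\mathbf{x}_p,\mathbf{x}_q\in\chi$ be the two points of $\chi$ that are adjacent to $\mathbf{x}_i$ along the boundary of $\mathrm{conv}\,\chi$, i.e., the points of $\chi\cap\partial(\mathrm{conv}\,\chi)$ immediately preceding and following $\mathbf{x}_i$ when this boundary is traversed cyclically. Then $\mathcal{D}_{i,\mathrm{DP}}$ is a polyhedral angle with vertex $\mathbf{x}_i$: there is a closed pointed convex cone $K\neq\{\mathbf{0}\}$ in $\mathbb{R}^2$ with $\mathcal{D}_{i,\mathrm{DP}}=\mathbf{x}_i+K$, and $K$ is bounded by two rays (which coincide when $\mathbf{x}_i$ is not a vertex of $\mathrm{conv}\,\chi$), one orthogonal to $\mathbf{x}_i-\mathbf{x}_p$ and the other orthogonal to $\mathbf{x}_i-\mathbf{x}_q$.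
   Context: A constellation is a finite set $\chi=\{\mathbf{x}_1,\dots,\mathbf{x}_M\}\subset\mathbb{R}^2$ of distinct points, $M\ge 3$, not all lying on one line. The Voronoi region of $\mathbf{x}_i$ is $\mathcal{D}_{i,\mathrm{ML}}=\{\mathbf{x}\in\mathbb{R}^2:\|\mathbf{x}-\mathbf{x}_i\|\le\|\mathbf{x}-\mathbf{x}_j\|\ \forall j\}$. Two distinct points $\mathbf{x}_i,\mathbf{x}_j$ are neighbors if their Voronoi regions share an edge (a common boundary segment or ray of positive length); $\mathcal{S}_i$ denotes the set of neighbors of $\mathbf{x}_i$. With $\mathbf{a}_{i,j}=\mathbf{x}_i-\mathbf{x}_j$, $b_{i,j}=\mathbf{a}_{i,j}^T(\mathbf{x}_i+\mathbf{x}_j)/2$ and $c_{i,j}=\|\mathbf{x}_i-\mathbf{x}_j\|^2/2$, one has $\mathcal{D}_{i,\mathrm{ML}}=\{\mathbf{x}:\mathbf{a}_{i,j}^T\mathbf{x}\ge b_{i,j}\ \forall \mathbf{x}_j\in\mathcal{S}_i\}$, and the distance preserving constructive interference region (DPCIR) of $\mathbf{x}_i$ is $\mathcal{D}_{i,\mathrm{DP}}=\{\mathbf{x}\in\mathbb{R}^2:\mathbf{a}_{i,j}^T\mathbf{x}\ge b_{i,j}+c_{i,j}\ \forall \mathbf{x}_j\in\mathcal{S}_i\}=\{\mathbf{x}:(\mathbf{x}_i-\mathbf{x}_j)^T(\mathbf{x}-\mathbf{x}_i)\ge 0\ \forall\mathbf{x}_j\in\mathcal{S}_i\}$. $\mathrm{conv}\,\chi$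 is the convex hull of $\chi$. *)

(* Points of the plane R^2 are pairs (R * R) over a real
   closed field R (e.g. the reals); pairs carry MathComp's zmod
   structure, so +, - and 0 act componentwise; smul is scaling. *)
From HB Require Import structures.
From mathcomp Require Import all_boot all_order all_algebra.
Set Implicit Arguments. Unset Strict Implicit. Unset Printing Implicit Defensive.
Import Order.TTheory GRing.Theory Num.Theory.
Local Open Scope ring_scope.

Section Geometry.
Variable R : rcfType.

Definition pt := (R * R)%type.

Definition dot (u v : pt) : R := u.1 * v.1 + u.2 * v.2.
Definition smul (t : R) (u : pt) : pt := (t * u.1, t * u.2).

Definition sqdist (x y : pt) : R := dot (x - y) (x - y).

Definition all_collinear (chi : seq pt) : Prop :=
  exists a b c : R, (a != 0 \/ b != 0) /\
    forall x, x \in chi -> a * x.1 + b * x.2 = c.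

Definition constellation (chi : seq pt) : Prop :=
  uniq chi /\ (3 <= size chi)%N /\ ~ all_collinear chi.

Definition voronoi (chi : seq pt) (xi : pt) (x : pt) : Prop :=
  forall xj, xj \in chi -> sqdist x xi <= sqdist x xj.

Definition on_segment (y z x : pt) : Prop :=
  exists t : R, 0 <= t <= 1 /\ x = y + smul t (z - y).

Definition neighbors (chi : seq pt) (xi xj : pt) : Prop :=
  xj \in chi /\ xj != xi /\
  exists y z : pt, y != z /\
    forall x, on_segment y z x -> voronoi chi xi x /\ voronoi chi xj x.

Definition dpcir (chi : seq pt) (xi : pt) (x : pt) : Prop :=
  forall xj, neighbors chi xi xj -> 0 <= dot (xi - xj) (x - xi).

Definition bounded (S : pt -> Prop) : Prop :=
  exists M : R, forall x, S x -> `|x.1| <= M /\ `|x.2| <= M.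

Definition conv (chi : seq pt) (x : pt) : Prop :=
  exists w : nat -> R, (forall k, 0 <= w k) /\
    \sum_(k < size chi) w k = 1 /\
    x = \sum_(k < size chi) smul (w k) (nth 0 chi k).

Definition boundary (S : pt -> Prop) (x : pt) : Prop :=
  (forall eps : R, 0 < eps -> exists y, S y /\ sqdist y x < eps) /\
  (forall eps : R, 0 < eps -> exists y, ~ S y /\ sqdist y x < eps).

(* xp is adjacent to xi along the boundary of conv chi: the segment
   [xi, xp] runs along the boundary of conv chi and contains no other point
   of chi, i.e. xp immediately precedes or follows xi when the points of
   chi on the boundary are traversed cyclically. *)
Definition hull_adjacent (chi : seq pt) (xi xp : pt) : Prop :=
  xp \in chi /\ xp != xi /\
  (forall x, on_segment xi xp x -> boundary (conv chi) x) /\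
  (forall xk, xk \in chi -> xk != xi -> xk != xp -> ~ on_segment xi xp xk).

Definition cone2 (u v : pt) (k : pt) : Prop :=
  exists a b : R, 0 <= a /\ 0 <= b /\ k = smul a u + smul b v.

Definition pointed (K : pt -> Prop) : Prop :=
  forall k, K k -> K (- k) -> k = 0.

End Geometry.

(* The hull neighbours [xp] and [xq] of [xi] are Voronoi neighbours of [xi].
   Indeed the midpoint of [xi, xp] is a boundary point of conv chi, so chi
   cannot have points strictly on both sides of the line through [xi] and
   [xp]: this line supports chi, with an outer normal [np] orthogonal to
   [xi - xp].  Far out on the bisector of [xi] and [xp], on the empty side,
   [xi] and [xp] are then the nearest points of chi.
   Since chi lies in both supporting half-planes, every Voronoi constraint
   holds on [xi] + cone(np, nq).  If [xi] is a vertex of the hull, the two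
   constraints coming from [xp] and [xq] already cut the DPCIR down to this
   cone.  If [xi - xp] and [xi - xq] are parallel they only give the line
   [xi] + R np; the ray is then cut out by a Voronoi neighbour strictly
   inside the hull, found by walking from [xi] into the hull until the first
   bisector is met. *)

From mathcomp Require Import all_boot all_order all_algebra.
From mathcomp Require Import ring lra.
Import Order.TTheory GRing.Theory Num.Theory.
Set Implicit Arguments. Unset Strict Implicit.
Local Open Scope ring_scope.

Section Plane.
Variable R : rcfType.
Implicit Types (chi : seq (pt R)) (u v w a b n g x y z : pt R) (s t : R).

Definition cross u v : R := u.1 * v.2 - u.2 * v.1.

Definition perp u : pt R := (- u.2, u.1).

Lemma pt_ext u v : u.1 = v.1 -> u.2 = v.2 -> u = v.
Proof. by case: u v => ? ? [? ?] /= -> ->. Qed.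

Lemma smul0 u : smul 0 u = 0.
Proof. by apply: pt_ext; rewrite /= mul0r. Qed.

Lemma smul1 u : smul 1 u = u.
Proof. by apply: pt_ext; rewrite /= mul1r. Qed.

Lemma dotC u v : dot u v = dot v u.
Proof. by rewrite /dot; ring. Qed.

Lemma dotDl u v w : dot (u + v) w = dot u w + dot v w.
Proof. by rewrite /dot /=; ring. Qed.

Lemma dotDr u v w : dot u (v + w) = dot u v + dot u w.
Proof. by rewrite /dot /=; ring. Qed.

Lemma dotNl u v : dot (- u) v = - dot u v.
Proof. by rewrite /dot /=; ring. Qed.

Lemma dotNr u v : dot u (- v) = - dot u v.
Proof. by rewrite /dot /=; ring. Qed.

Lemma dot_smulr u v t : dot u (smul t v) = t * dot u v.
Proof. by rewrite /dot /smul /=; ring. Qed.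

Lemma dot_smulDr u v w s t :
  dot u (smul s v + smul t w) = s * dot u v + t * dot u w.
Proof. by rewrite /dot /smul /=; ring. Qed.

Lemma dot_perp u v : dot (perp u) v = cross u v.
Proof. by rewrite /dot /cross /=; ring. Qed.

Lemma crossC u v : cross v u = - cross u v.
Proof. by rewrite /cross; ring. Qed.

Lemma cross_perp u : cross u (perp u) = dot u u.
Proof. by rewrite /dot /cross /=; ring. Qed.

Lemma dot_ge0 u : 0 <= dot u u.
Proof. by rewrite /dot addr_ge0 // -expr2 sqr_ge0. Qed.

Lemma dot_gt0 u : u != 0 -> 0 < dot u u.
Proof.
case: u => u1 u2 nz; rewrite lt_def dot_ge0 andbT /dot /=.
rewrite paddr_eq0 -?expr2 ?sqr_ge0 // !sqrf_eq0.
by apply: contra nz => /andP[/eqP-> /eqP->].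
Qed.

Lemma perp_eq0 u : (perp u == 0) = (u == 0).
Proof. by case: u => u1 u2; rewrite /perp !xpair_eqE oppr_eq0 andbC. Qed.

Lemma cross_sqr_le u v : cross u v ^+ 2 <= dot u u * dot v v.
Proof.
have -> : dot u u * dot v v = cross u v ^+ 2 + dot u v ^+ 2.
  by rewrite /dot /cross; ring.
by rewrite lerDl sqr_ge0.
Qed.

(* Cramer's rule: [a] and [b] span the plane, so the two coordinates
   [dot a v] and [dot b v] determine [v]. *)
Lemma dot2_inj a b v w : cross a b != 0 ->
  dot a v = dot a w -> dot b v = dot b w -> v = w.
Proof.
move=> ab av bv.
have E1 : cross a b * (v.1 - w.1) = b.2 * (dot a v - dot a w) - a.2 * (dot b v - dot b w).
  by rewrite /cross /dot; ring.
have E2 : cross a b * (v.2 - w.2) = a.1 * (dot b v - dot b w) - b.1 * (dot a v - dot a w).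
  by rewrite /cross /dot; ring.
rewrite av bv !subrr !mulr0 subrr in E1 E2.
move/eqP: E1; move/eqP: E2; rewrite !mulf_eq0 (negbTE ab) !subr_eq0 /=.
by clear av bv; move: v w => [v1 v2] [w1 w2] /= /eqP-> /eqP->.
Qed.

Lemma parallel_smul a b : a != 0 -> cross a b = 0 ->
  b = smul (dot a b / dot a a) a.
Proof.
move=> /dot_gt0 aa ab; apply: (@dot2_inj a (perp a)); rewrite ?cross_perp ?gt_eqF //.
  by rewrite dot_smulr divfK ?gt_eqF.
by rewrite !dot_perp ab /cross /smul /=; ring.
Qed.

Lemma perp_common_cross0 n a v : n != 0 ->
  dot n a = 0 -> dot n v = 0 -> cross a v = 0.
Proof.
move=> n0 na nv; apply/eqP; apply: contraNT n0 => av; apply/eqP.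
by apply: (@dot2_inj a v n 0 av); rewrite dotC ?na ?nv /dot /= !mulr0 addr0.
Qed.

Lemma shift_neq y w s t : w != 0 -> s != t -> y + smul s w != y + smul t w.
Proof.
move=> /dot_gt0 ww; apply: contra => /eqP /(congr1 (dot w)).
by rewrite !dotDr !dot_smulr => /addrI /mulIf -> //; rewrite gt_eqF.
Qed.

Lemma seq_argmin (T : eqType) (f : T -> R) (l : seq T) :
  l != [::] -> exists2 i, i \in l & forall j, j \in l -> f i <= f j.
Proof.
elim: l => [//|a l IH] _; case: (eqVneq l [::]) => [->|/IH [x xl Hx]].
  by exists a; rewrite ?mem_seq1 // => y; rewrite mem_seq1 => /eqP ->.
have [le_ax|lt_xa] := lerP (f a) (f x).
  exists a; rewrite ?mem_head // => y; rewrite in_cons.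
  by case/orP=> [/eqP -> //|/Hx]; apply: le_trans.
exists x; rewrite ?in_cons ?xl ?orbT // => y; rewrite in_cons.
by case/orP=> [/eqP -> |/Hx //]; apply: ltW.
Qed.

Lemma seq_eventually (T : eqType) (P : T -> R -> Prop) (l : seq T) :
  (forall i, i \in l -> exists s0, forall s, s0 <= s -> P i s) ->
  exists s0, forall s, s0 <= s -> forall i, i \in l -> P i s.
Proof.
elim: l => [|a l IH] H; first by exists 0.
have [s1 H1] := H a (mem_head _ _).
have [s2 H2] := IH (fun i il => H i (mem_behead (s := a :: l) il)).
exists (Num.max s1 s2) => s; rewrite ge_max => /andP [h1 h2] x.
by rewrite in_cons => /orP [/eqP ->|/H2]; [apply: H1 | apply].
Qed.

Lemma seq_near0 (T : eqType) (P : T -> R -> Prop) (l : seq T) :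
  (forall i, i \in l -> exists2 s0, 0 < s0 & forall s, 0 < s <= s0 -> P i s) ->
  exists2 s0, 0 < s0 & forall s, 0 < s <= s0 -> forall i, i \in l -> P i s.
Proof.
elim: l => [|a l IH] H; first by exists 1.
have [s1 s1_gt0 H1] := H a (mem_head _ _).
have [s2 s2_gt0 H2] := IH (fun i il => H i (mem_behead (s := a :: l) il)).
exists (Num.min s1 s2) => [|s]; first by rewrite lt_min s1_gt0.
rewrite le_min => /andP [s_gt0 /andP [h1 h2]] x.
by rewrite in_cons => /orP [/eqP ->|/H2]; [apply: H1 | apply]; rewrite s_gt0.
Qed.

Lemma sqdist_shift y w a b s :
  sqdist (y + smul s w) b - sqdist (y + smul s w) a =
  sqdist y b - sqdist y a + 2 * s * dot w (a - b).
Proof. by rewrite /sqdist /dot /smul /=; ring. Qed.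

Lemma sqdist_segment y z a b t :
  sqdist (y + smul t (z - y)) b - sqdist (y + smul t (z - y)) a =
  (1 - t) * (sqdist y b - sqdist y a) + t * (sqdist z b - sqdist z a).
Proof. by rewrite /sqdist /dot /smul /=; ring. Qed.

Lemma neighbors_of_equidistant chi xi xj y z :
  xj \in chi -> xj != xi -> y != z ->
  voronoi chi xi y -> voronoi chi xi z ->
  sqdist y xj = sqdist y xi -> sqdist z xj = sqdist z xi ->
  neighbors chi xi xj.
Proof.
move=> xj_chi xji yz Vy Vz Ey Ez; do 2!split=> //.
exists y, z; split=> // x [t [/andP [t0 t1] ->]].
have Vx : voronoi chi xi (y + smul t (z - y)).
  move=> xk /[dup] /Vy Vyk /Vz Vzk; rewrite -subr_ge0 sqdist_segment.
  by rewrite addr_ge0 ?mulr_ge0 ?subr_ge0.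
have Ex : sqdist (y + smul t (z - y)) xj = sqdist (y + smul t (z - y)) xi.
  by apply/eqP; rewrite -subr_eq0 sqdist_segment Ey Ez !subrr !mulr0 addr0.
by split=> // xk; rewrite Ex; apply: Vx.
Qed.

Lemma sum_fst I (r : seq I) (F : I -> pt R) :
  (\sum_(i <- r) F i).1 = \sum_(i <- r) (F i).1.
Proof. exact: (big_morph fst (fun _ _ => erefl) erefl). Qed.

Lemma sum_snd I (r : seq I) (F : I -> pt R) :
  (\sum_(i <- r) F i).2 = \sum_(i <- r) (F i).2.
Proof. exact: (big_morph snd (fun _ _ => erefl) erefl). Qed.

(* The weight of the [k]-th point of [chi] collects the weights of all the
   pairs of [s] whose point has index [k]. *)
Lemma conv_mixture chi (s : seq (R * pt R)) :
  all (fun p => p.2 \in chi) s -> all (fun p => 0 <= p.1) s ->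
  \sum_(p <- s) p.1 = 1 -> conv chi (\sum_(p <- s) smul p.1 p.2).
Proof.
move=> /allP s_chi /allP s_ge0 s1.
pose w (k : nat) := \sum_(p <- s) p.1 * (k == index p.2 chi)%:R.
have pick p (F : nat -> R) : p \in s ->
    \sum_(k < size chi) (k == index p.2 chi :> nat)%:R * F k = F (index p.2 chi).
  move=> /s_chi; rewrite -index_mem => lt; rewrite (bigD1 (Ordinal lt)) //=.
  rewrite eqxx mul1r big1 ?addr0 // => k; rewrite -val_eqE /= => /negbTE ->.
  by rewrite mul0r.
have wE (F : nat -> R) : \sum_(k < size chi) w k * F k = \sum_(p <- s) p.1 * F (index p.2 chi).
  under eq_bigr do rewrite mulr_suml.
  rewrite exchange_big /=; apply: eq_big_seq => p ps.
  by rewrite -(pick p _ ps) mulr_sumr; apply: eq_bigr => k _; rewrite mulrA.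
exists w; split.
  by move=> k; rewrite /w big_seq; apply: sumr_ge0 => p /s_ge0 p0; rewrite mulr_ge0.
split.
  rewrite -s1; transitivity (\sum_(k < size chi) w k * 1).
    by under [RHS]eq_bigr do rewrite mulr1.
  by rewrite (wE (fun=> 1)); under eq_bigr do rewrite mulr1.
rewrite [LHS]surjective_pairing [RHS]surjective_pairing !sum_fst !sum_snd /=.
rewrite (wE (fun k => (nth 0 chi k).1)) (wE (fun k => (nth 0 chi k).2)).
by congr (_, _); apply: eq_big_seq => p /s_chi p_chi; rewrite nth_index.
Qed.

Lemma conv_triangle chi x0 x1 x2 s t :
  x0 \in chi -> x1 \in chi -> x2 \in chi -> 0 <= s -> 0 <= t -> s + t <= 1 ->
  conv chi (smul (1 - s - t) x0 + smul s x1 + smul t x2).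
Proof.
move=> x0_chi x1_chi x2_chi s0 t0 st1.
have := @conv_mixture chi [:: (1 - s - t, x0); (s, x1); (t, x2)].
rewrite !big_cons !big_nil /= x0_chi x1_chi x2_chi s0 t0 !addr0 !addrA.
by apply=> //; [rewrite !andbT; lra | ring].
Qed.

Definition midpoint x y : pt R := x + smul (1 / 2) (y - x).

Lemma midpointC x y : midpoint x y = midpoint y x.
Proof. by apply: pt_ext; rewrite /= /smul /=; field. Qed.

Lemma cross_swap x y z : cross (x - y) (z - y) = - cross (y - x) (z - x).
Proof. by rewrite /cross /=; ring. Qed.

Lemma cross_small v c : 0 < c ->
  exists2 eps, 0 < eps & forall u, dot u u < eps -> `|cross u v| < c.
Proof.
move=> c0; have vv := dot_ge0 v; have vv1 : 0 < dot v v + 1 by rewrite ltr_wpDl.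
exists (c ^+ 2 / (dot v v + 1)) => [|u]; first by rewrite divr_gt0 ?exprn_gt0.
rewrite ltr_pdivlMr // => uu_small; have := cross_sqr_le u v; have := dot_ge0 u.
by rewrite ltr_norml; move=> *; apply/andP; split; nra.
Qed.

(* Near the midpoint of the edge [x0, x1] of the triangle (x0, x1, x2), the
   barycentric coordinates of x0 and x1 stay close to 1/2. *)
Lemma conv_near_midpoint chi x0 x1 x2 :
  x0 \in chi -> x1 \in chi -> x2 \in chi -> 0 < cross (x1 - x0) (x2 - x0) ->
  exists2 eps, 0 < eps & forall x, sqdist x (midpoint x0 x1) < eps ->
    0 <= cross (x1 - x0) (x - x0) -> conv chi x.
Proof.
set e := x1 - x0; set f := x2 - x0; move=> x0_chi x1_chi x2_chi h_gt0.
set h := cross e f in h_gt0; have h2_gt0 : 0 < h / 2 by rewrite divr_gt0.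
have [eps1 eps1_gt0 small_f] := cross_small f h2_gt0.
have [eps2 eps2_gt0 small_fe] := cross_small (f - e) h2_gt0.
exists (Num.min eps1 eps2) => [|x]; first by rewrite lt_min eps1_gt0.
rewrite /sqdist lt_min => /andP [/small_f uf /small_fe ufe] b_ge0.
set u := x - midpoint x0 x1 in uf ufe.
set a := cross (x - x0) f / h; set b := cross e (x - x0) / h.
have xE : x = smul (1 - a - b) x0 + smul a x1 + smul b x2.
  move: (lt0r_neq0 h_gt0); rewrite /a /b /h /e /f /cross /= => nz.
  by apply: pt_ext; rewrite /smul /=; field.
have aE : a = (h / 2 + cross u f) / h.
  by rewrite /a /u /midpoint /e /f /h /cross /smul /=; congr (_ / _); field.
have abE : 1 - a - b = (h / 2 - cross u (f - e)) / h.
  rewrite /a /b /u /midpoint /e /f /h /cross /smul /=; field.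
  by rewrite lt0r_neq0.
rewrite xE; apply: conv_triangle => //.
- by rewrite aE divr_ge0 ?ltW //; move: uf; rewrite ltr_norml; lra.
- by rewrite /b divr_ge0 // ltW.
- rewrite -subr_ge0 opprD addrA abE divr_ge0 ?ltW //.
  by move: ufe; rewrite ltr_norml; lra.
Qed.

Lemma conv_around_midpoint chi x0 x1 y1 y2 :
  x0 \in chi -> x1 \in chi -> y1 \in chi -> y2 \in chi ->
  0 < cross (x1 - x0) (y1 - x0) -> cross (x1 - x0) (y2 - x0) < 0 ->
  exists2 eps, 0 < eps & forall x, sqdist x (midpoint x0 x1) < eps -> conv chi x.
Proof.
move=> x0_chi x1_chi y1_chi y2_chi y1_pos y2_neg.
have [eps1 eps1_gt0 conv1] := conv_near_midpoint x0_chi x1_chi y1_chi y1_pos.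
have [eps2 eps2_gt0 conv2] : exists2 eps, 0 < eps &
    forall x, sqdist x (midpoint x0 x1) < eps -> 0 <= cross (x0 - x1) (x - x1) -> conv chi x.
  by rewrite midpointC; apply: (conv_near_midpoint (x2 := y2)); rewrite // cross_swap oppr_gt0.
exists (Num.min eps1 eps2) => [|x]; first by rewrite lt_min eps1_gt0.
rewrite lt_min => /andP [near1 near2].
have [side|side] := lerP 0 (cross (x1 - x0) (x - x0)); first exact: conv1.
by apply: conv2; rewrite // cross_swap oppr_ge0 ltW.
Qed.

Definition supporting chi xi n := forall xk, xk \in chi -> dot n (xk - xi) <= 0.

Lemma hull_adjacent_support chi xi xp : xi \in chi -> hull_adjacent chi xi xp ->
  exists n, n != 0 /\ dot n (xi - xp) = 0 /\ supporting chi xi n.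
Proof.
move=> xi_chi [xp_chi [xpi [bd _]]]; set e := xp - xi.
have e0 : e != 0 by rewrite subr_eq0.
have [_ outside] : boundary (conv chi) (midpoint xi xp).
  apply: bd; exists (1 / 2); split=> //.
  by rewrite divr_ge0 ?ler01 ?ler0n // ler_pdivrMr ?ltr0n // mul1r ler1n.
have one_side y1 y2 : y1 \in chi -> y2 \in chi ->
    0 < cross e (y1 - xi) -> cross e (y2 - xi) < 0 -> False.
  move=> y1_chi y2_chi y1_pos y2_neg.
  have [eps eps_gt0 inside] := conv_around_midpoint xi_chi xp_chi y1_chi y2_chi y1_pos y2_neg.
  by have [y [/[swap] /inside]] := outside eps eps_gt0.
have perp_e : dot (perp e) (xi - xp) = 0 by rewrite dot_perp /e /cross /=; ring.
have [/hasP [y1 y1_chi y1_pos]|/hasPn nonpos] := boolP (has (fun y => 0 < cross e (y - xi)) chi).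
  exists (- perp e); rewrite oppr_eq0 perp_eq0 e0 dotNl perp_e oppr0.
  do 2!split=> //; move=> xk xk_chi; rewrite dotNl dot_perp oppr_le0 leNgt.
  by apply/negP => /(one_side _ _ y1_chi xk_chi y1_pos).
exists (perp e); rewrite perp_eq0 e0.
by do 2!split=> //; move=> xk /nonpos; rewrite dot_perp -leNgt.
Qed.

Lemma sqdist_midpoint x y : sqdist (midpoint x y) y = sqdist (midpoint x y) x.
Proof. by rewrite /sqdist /midpoint /dot /smul /=; field. Qed.

Lemma sqdist_midpoint_line x y t :
  sqdist (midpoint x y) (x + smul t (y - x)) - sqdist (midpoint x y) x =
  t * (t - 1) * dot (y - x) (y - x).
Proof. by rewrite /sqdist /midpoint /dot /smul /=; field. Qed.

(* A point of [chi] on the line through [xi] and [xp] is not strictly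
   between them, hence not closer than [xi] to their midpoint. *)
Lemma hull_adjacent_collinear_far chi xi xp xk :
  hull_adjacent chi xi xp -> xk \in chi -> cross (xp - xi) (xk - xi) = 0 ->
  sqdist (midpoint xi xp) xi <= sqdist (midpoint xi xp) xk.
Proof.
move=> [_ [xpi [_ no_between]]] xk_chi coll.
have e0 : xp - xi != 0 by rewrite subr_eq0.
set mu := dot (xp - xi) (xk - xi) / dot (xp - xi) (xp - xi).
have xkE : xk = xi + smul mu (xp - xi).
  by rewrite -(parallel_smul e0 coll) subrKC.
rewrite -subr_ge0 xkE sqdist_midpoint_line mulr_ge0 ?dot_ge0 //.
have [mu_gt0|] := ltrP 0 mu; last by move=> mu_le0; nra.
have [mu_lt1|] := ltrP mu 1; last by move=> mu_ge1; nra.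
exfalso; apply: (no_between xk xk_chi).
- rewrite xkE; have := shift_neq xi e0 (lt0r_neq0 mu_gt0).
  by rewrite smul0 addr0.
- rewrite xkE; have := shift_neq xi e0 (negbT (lt_eqF mu_lt1)).
  by rewrite smul1 subrKC.
- by exists mu; rewrite (ltW mu_gt0) (ltW mu_lt1).
Qed.

Lemma hull_adjacent_neighbors chi xi xp n :
  hull_adjacent chi xi xp -> n != 0 -> dot n (xi - xp) = 0 ->
  supporting chi xi n -> neighbors chi xi xp.
Proof.
move=> adj n0 n_xp supp; have [xp_chi [xpi _]] := adj.
set m := midpoint xi xp.
have [s0 far] : exists s0, forall s, s0 <= s -> forall xk, xk \in chi ->
    sqdist (m + smul s n) xi <= sqdist (m + smul s n) xk.
  apply: seq_eventually => xk xk_chi.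
  have c_ge0 : 0 <= dot n (xi - xk) by rewrite -opprB dotNr oppr_ge0 supp.
  set c := dot n (xi - xk) in c_ge0; set del := sqdist m xk - sqdist m xi.
  have [c_gt0|c_le0] := ltrP 0 c.
    exists (- del / (2 * c)) => s; rewrite ler_pdivrMr ?mulr_gt0 // => le_s.
    by rewrite -subr_ge0 sqdist_shift -/del -/c; nra.
  have c0 : c = 0 by apply/le_anti; rewrite c_le0.
  exists 0 => s _; rewrite -subr_ge0 sqdist_shift -/c c0 mulr0 addr0 subr_ge0.
  apply: hull_adjacent_collinear_far adj xk_chi _.
  apply: (perp_common_cross0 n0); first by rewrite -opprB dotNr n_xp oppr0.
  by rewrite -opprB dotNr -/c c0 oppr0.
have equi s : sqdist (m + smul s n) xp = sqdist (m + smul s n) xi.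
  by apply/eqP; rewrite -subr_eq0 sqdist_shift n_xp mulr0 addr0 sqdist_midpoint subrr.
apply: (@neighbors_of_equidistant _ _ _ (m + smul s0 n) (m + smul (s0 + 1) n)) => //.
- by rewrite shift_neq // eq_sym -subr_eq0 addrAC subrr add0r oner_eq0.
- by move=> xk; apply: far.
- by move=> xk; apply: far; rewrite lerDl.
Qed.

Lemma sqdist_diff_origin y xi xk : sqdist y xk - sqdist y xi =
  dot (xk - xi) (xk - xi) - 2 * dot (y - xi) (xk - xi).
Proof. by rewrite /sqdist /dot /=; ring. Qed.

Lemma cross_dot_ratio g a b :
  cross g a * dot g b - cross g b * dot g a = - (dot g g * cross a b).
Proof. by rewrite /cross /dot; ring. Qed.

(* Points in an open half-plane bounded by a line through [xi] are ordered by
   their angle around [xi]; the first one, [xj], leaves all others on one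
   side of the line through [xi] and [xj]. *)
Lemma halfplane_extreme xi g (T : seq (pt R)) : T != [::] ->
  (forall xl, xl \in T -> 0 < dot g (xl - xi)) ->
  exists2 xj, xj \in T & exists2 w, w != 0 &
    dot w (xi - xj) = 0 /\ forall xl, xl \in T -> 0 <= dot w (xi - xl).
Proof.
move=> T0 g_pos.
have [xj xj_T xj_min] := seq_argmin (fun xl => cross g (xl - xi) / dot g (xl - xi)) T0.
have xji : xj - xi != 0.
  by apply: contraTneq (g_pos _ xj_T) => ->; rewrite /dot /= !mulr0 addr0 ltxx.
have gg : 0 < dot g g.
  by apply: dot_gt0; apply: contraTneq (g_pos _ xj_T) => ->; rewrite /dot /= !mul0r addr0 ltxx.
exists xj => //; exists (- perp (xj - xi)); first by rewrite oppr_eq0 perp_eq0.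
split; first by rewrite dotNl dot_perp /cross /=; ring.
move=> xl /[dup] xl_T /xj_min; rewrite ler_pdivrMr ?g_pos // mulrAC ler_pdivlMr ?g_pos //.
rewrite -subr_le0 cross_dot_ratio oppr_le0 pmulr_rge0 // => cr.
by rewrite -[xi - xl]opprB dotNr dotNl opprK dot_perp.
Qed.

(* The points of [chi] as far from [y] as [xi] lie on a circle through [xi],
   hence in the open half-plane [0 < dot (y - xi) _].  Moving [y] along the
   bisector of [xi] and the extreme such point keeps [y] in the Voronoi
   region of [xi] for a while. *)
Lemma voronoi_tight_neighbor chi xi y xk :
  voronoi chi xi y -> xk \in chi -> xk != xi -> sqdist y xk = sqdist y xi ->
  exists xj, neighbors chi xi xj /\ sqdist y xj = sqdist y xi.
Proof.
move=> Vy xk_chi xki tight_k.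
pose tight := [seq xl <- chi | (xl != xi) && (sqdist y xl == sqdist y xi)].
have tightP xl : reflect [/\ xl \in chi, xl != xi & sqdist y xl = sqdist y xi]
    (xl \in tight).
  rewrite mem_filter andbC; apply: (iffP and3P) => -[-> ->]; first by move/eqP.
  by move=> ->; rewrite eqxx.
have tight0 : tight != [::].
  by apply: contraTneq (introT (tightP xk) (And3 xk_chi xki tight_k)) => ->.
have on_side xl : xl \in tight -> 0 < dot (y - xi) (xl - xi).
  case/tightP=> _ xli /eqP; rewrite -subr_eq0 sqdist_diff_origin subr_eq0 => /eqP E.
  have : 0 < dot (xl - xi) (xl - xi) by rewrite dot_gt0 // subr_eq0.
  by rewrite E pmulr_rgt0.
have [xj /tightP [xj_chi xji tight_j] [w w0 [w_j w_tight]]] :=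
  halfplane_extreme tight0 on_side.
have [s0 s0_gt0 small] : exists2 s0, 0 < s0 & forall s, 0 < s <= s0 ->
    forall xl, xl \in chi -> 0 <= sqdist y xl - sqdist y xi + 2 * s * dot w (xi - xl).
  apply: seq_near0 => xl xl_chi.
  have slack_ge0 : 0 <= sqdist y xl - sqdist y xi by rewrite subr_ge0 Vy.
  have [w_ge0|w_lt0] := lerP 0 (dot w (xi - xl)).
    by exists 1 => // s /andP [s_gt0 _]; rewrite addr_ge0 // !mulr_ge0 // ltW.
  have slack_gt0 : 0 < sqdist y xl - sqdist y xi.
    rewrite lt_def slack_ge0 andbT subr_eq0; apply: contraTN w_lt0 => /eqP tight_l.
    have [->|xli] := eqVneq xl xi; first by rewrite subrr /dot /= !mulr0 addr0 ltxx.
    by rewrite -leNgt w_tight //; apply/tightP.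
  exists ((sqdist y xl - sqdist y xi) / (2 * - dot w (xi - xl))).
    by rewrite divr_gt0 // mulr_gt0 // oppr_gt0.
  move=> s /andP [s_gt0]; rewrite ler_pdivlMr ?mulr_gt0 ?oppr_gt0 //; nra.
exists xj; split=> //.
apply: (@neighbors_of_equidistant _ _ _ y (y + smul s0 w)) => //.
- by have := shift_neq y w0 (lt0r_neq0 s0_gt0); rewrite eq_sym smul0 addr0.
- by move=> xl xl_chi; rewrite -subr_ge0 sqdist_shift small // s0_gt0 lexx.
- by apply/eqP; rewrite -subr_eq0 sqdist_shift w_j mulr0 addr0 tight_j subrr.
Qed.

Lemma sqdist_diff_ray y xi n xk t : y = xi + smul (- t) n ->
  sqdist y xk - sqdist y xi = dot (xk - xi) (xk - xi) - 2 * t * dot n (xi - xk).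
Proof. by move=> ->; rewrite /sqdist /dot /smul /=; ring. Qed.

Lemma support_inner_neighbor chi xi n : supporting chi xi n ->
  (exists2 xk, xk \in chi & dot n (xk - xi) < 0) ->
  exists xj, neighbors chi xi xj /\ dot n (xj - xi) < 0.
Proof.
move=> supp [xk xk_chi xk_inner].
pose c xl := dot n (xi - xl).
have cE xl : c xl = - dot n (xl - xi) by rewrite /c -opprB dotNr.
pose inner := [seq xl <- chi | 0 < c xl].
pose t xl := dot (xl - xi) (xl - xi) / (2 * c xl).
have inner0 : inner != [::].
  by apply: contraTneq (_ : xk \in inner) => [->|]; rewrite // mem_filter cE oppr_gt0 xk_inner.
have [xl0] := seq_argmin t inner0; rewrite mem_filter => /andP [c0_gt0 xl0_chi] t_min.
set y := xi + smul (- t xl0) n.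
have diffE xl := sqdist_diff_ray xl (erefl y).
have xl0i : xl0 != xi by apply: contraTneq c0_gt0 => ->; rewrite /c subrr /dot /= !mulr0 addr0 ltxx.
have t0_gt0 : 0 < t xl0 by rewrite divr_gt0 ?mulr_gt0 ?dot_gt0 // subr_eq0.
have Vy : voronoi chi xi y.
  move=> xl xl_chi; rewrite -subr_ge0 diffE -/(c xl).
  have [c_gt0|c_le0] := ltrP 0 (c xl).
    have := t_min xl; rewrite mem_filter c_gt0 xl_chi => /(_ isT).
    by rewrite {2}/t ler_pdivlMr ?mulr_gt0 // subr_ge0 mulrA [_ * 2]mulrC.
  have -> : c xl = 0 by apply/le_anti; rewrite c_le0 cE oppr_ge0 supp.
  by rewrite mulr0 subr0 dot_ge0.
have tight0 : sqdist y xl0 = sqdist y xi.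
  apply/eqP; rewrite -subr_eq0 diffE -/(c xl0) /t; apply/eqP; field.
  exact: lt0r_neq0.
have [xj [nb_j tight_j]] := voronoi_tight_neighbor Vy xl0_chi xl0i tight0.
exists xj; split=> //; rewrite -oppr_gt0 -cE.
have [_ [xji _]] := nb_j.
move/eqP: tight_j; rewrite -subr_eq0 diffE -/(c xj) subr_eq0 => /eqP vv.
have : 0 < dot (xj - xi) (xj - xi) by rewrite dot_gt0 // subr_eq0.
by rewrite vv -mulrA pmulr_rgt0 // pmulr_rgt0.
Qed.

Lemma noncollinear_supporting_strict chi xi n :
  ~ all_collinear chi -> n != 0 -> supporting chi xi n ->
  exists2 xk, xk \in chi & dot n (xk - xi) < 0.
Proof.
move=> noncol n0 supp.
have [/hasP [xk xk_chi xk_in]|/hasPn none] := boolP (has (fun xk => dot n (xk - xi) < 0) chi).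
  by exists xk.
case: noncol; exists n.1, n.2, (dot n xi); split.
  have [n1|] := eqVneq n.1 0; last by left.
  by right; apply: contra n0 => /eqP n2; apply/eqP/pt_ext.
move=> y y_chi; have /le_anti : dot n (y - xi) <= 0 <= dot n (y - xi).
  by rewrite supp //= leNgt none.
by move=> E; apply/eqP; rewrite -subr_eq0 -E /dot /=; apply/eqP; ring.
Qed.

(* Otherwise one of [xp], [xq] would lie on the segment from [xi] to the other. *)
Lemma hull_adjacent_opposite chi xi xp xq :
  hull_adjacent chi xi xp -> hull_adjacent chi xi xq -> xp != xq ->
  cross (xi - xp) (xi - xq) = 0 -> dot (xi - xp) (xi - xq) < 0.
Proof.
move=> [xp_chi [xpi [_ no_between_p]]] [xq_chi [xqi [_ no_between_q]]] pq.
have -> : cross (xi - xp) (xi - xq) = cross (xp - xi) (xq - xi) by rewrite /cross /=; ring.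
have -> : dot (xi - xp) (xi - xq) = dot (xp - xi) (xq - xi) by rewrite /dot /=; ring.
have e0 : xp - xi != 0 by rewrite subr_eq0.
move=> /(parallel_smul e0); set mu := _ / _ => xqE.
have ee := dot_gt0 e0; rewrite ltNge; apply/negP => ef_ge0.
have mu_ge0 : 0 <= mu by rewrite divr_ge0 // ltW.
have xq_line : xq = xi + smul mu (xp - xi) by rewrite -xqE subrKC.
have [mu0|mu_neq0] := eqVneq mu 0.
  by move: xqi; rewrite xq_line mu0 smul0 addr0 eqxx.
have [mu_le1|mu_gt1] := lerP mu 1.
  apply: (no_between_p xq xq_chi xqi); first by rewrite eq_sym.
  by exists mu; rewrite mu_ge0 mu_le1.
apply: (no_between_q xp xp_chi xpi pq); exists mu^-1; split.
  by rewrite invr_ge0 mu_ge0 invf_le1 ?ltW // lt_def mu_neq0.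
rewrite xq_line addrAC subrr add0r.
by apply: pt_ext; rewrite /= mulrA mulVf // mul1r subrKC.
Qed.

Lemma supporting_dot_gt0 chi xi xp xq n :
  supporting chi xi n -> n != 0 -> dot n (xi - xp) = 0 -> xq \in chi ->
  cross (xi - xp) (xi - xq) != 0 -> 0 < dot n (xi - xq).
Proof.
move=> supp n0 n_p xq_chi pq; rewrite lt_def -opprB dotNr oppr_ge0 supp // andbT oppr_eq0.
apply: contraNneq pq => n_q; apply/eqP/(perp_common_cross0 n0) => //.
by rewrite -opprB dotNr n_q oppr0.
Qed.

Definition dpcir_angle chi xi u v :=
  pointed (cone2 u v) /\
  forall x, dpcir chi xi x <-> exists k, cone2 u v k /\ x = xi + k.

Lemma pointed_cone2 g u v : 0 < dot g u -> 0 < dot g v -> pointed (cone2 u v).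
Proof.
move=> gu gv k [a [b [a_ge0 [b_ge0 kE]]]] [a' [b' [a'_ge0 [b'_ge0 kE']]]].
have : dot g k + dot g (- k) = 0 by rewrite dotNr subrr.
rewrite {1}kE kE' !dot_smulDr => sum0.
have a0 : a = 0 by nra.
have b0 : b = 0 by nra.
by rewrite kE a0 b0 !smul0 addr0.
Qed.

Lemma cone2_dpcir chi xi u v k : supporting chi xi u -> supporting chi xi v ->
  cone2 u v k -> dpcir chi xi (xi + k).
Proof.
move=> supu supv [a [b [a_ge0 [b_ge0 ->]]]] xj [xj_chi _].
rewrite addrAC subrr add0r dotDr !dot_smulr.
by rewrite addr_ge0 // mulr_ge0 // dotC -opprB dotNr oppr_ge0 ?supu ?supv.
Qed.

Lemma dpcir_vertex chi xi xp xq np nq :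
  neighbors chi xi xp -> neighbors chi xi xq ->
  np != 0 -> nq != 0 -> supporting chi xi np -> supporting chi xi nq ->
  dot np (xi - xp) = 0 -> dot nq (xi - xq) = 0 ->
  cross (xi - xp) (xi - xq) != 0 -> dpcir_angle chi xi np nq.
Proof.
move=> nbp nbq np0 nq0 supp supq np_p nq_q pq.
have np_q := supporting_dot_gt0 supp np0 np_p nbq.1 pq.
have nq_p : 0 < dot nq (xi - xp).
  by apply: (supporting_dot_gt0 supq nq0 nq_q nbp.1); rewrite crossC oppr_eq0.
split.
  apply: (@pointed_cone2 ((xi - xp) + (xi - xq)));
  by rewrite dotDl ?(dotC _ np) ?(dotC _ nq) ?np_p ?nq_q ?add0r ?addr0.
move=> x; split=> [dp|[k [k_cone ->]]]; last exact: (cone2_dpcir supp supq k_cone).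
have p_x := dp xp nbp; have q_x := dp xq nbq.
exists (x - xi); split; last by rewrite subrKC.
exists (dot (xi - xq) (x - xi) / dot np (xi - xq)), (dot (xi - xp) (x - xi) / dot nq (xi - xp)).
rewrite !divr_ge0 ?(ltW np_q) ?(ltW nq_p) //; do 2!split=> //.
apply: (dot2_inj pq); rewrite dot_smulDr [dot _ np]dotC [dot _ nq]dotC.
  by rewrite np_p mulr0 add0r divfK // gt_eqF.
by rewrite nq_q mulr0 addr0 divfK // gt_eqF.
Qed.

Lemma dpcir_flat chi xi xp xq xj n :
  neighbors chi xi xp -> neighbors chi xi xq -> neighbors chi xi xj ->
  n != 0 -> supporting chi xi n -> dot n (xi - xp) = 0 -> dot n (xj - xi) < 0 ->
  cross (xi - xp) (xi - xq) = 0 -> dot (xi - xp) (xi - xq) < 0 ->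
  dpcir_angle chi xi n n.
Proof.
move=> nbp nbq nbj n0 supp n_p n_j pq pq_opp.
split; first exact: (pointed_cone2 (dot_gt0 n0) (dot_gt0 n0)).
move=> x; split=> [dp|[k [k_cone ->]]]; last exact: (cone2_dpcir supp supp k_cone).
have p_x := dp xp nbp; have q_x := dp xq nbq; have j_x := dp xj nbj.
set d := x - xi in p_x q_x j_x *.
have p0 : xi - xp != 0 by apply: contraTneq pq_opp => ->; rewrite /dot /= !mul0r addr0 ltxx.
have qE := parallel_smul p0 pq; set mu := _ / _ in qE.
have mu_lt0 : mu < 0 by rewrite pmulr_llt0 ?invr_gt0 ?dot_gt0.
have p_d : dot (xi - xp) d = 0.
  by apply/le_anti; rewrite p_x andbT -(nmulr_rge0 _ mu_lt0) [dot _ d]dotC -dot_smulr -qE dotC.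
have dE := parallel_smul n0 (perp_common_cross0 p0 (etrans (dotC _ _) n_p) p_d).
set g := _ / _ in dE.
have g_ge0 : 0 <= g.
  move: j_x; rewrite dE dot_smulr dotC -opprB dotNr mulrN oppr_ge0.
  by rewrite nmulr_lle0.
exists d; split; last by rewrite subrKC.
by exists g, 0; rewrite smul0 addr0 g_ge0 lexx.
Qed.

End Plane.

Theorem lemma2 (R : rcfType) (chi : seq (pt R)) (xi xp xq : pt R) :
  constellation chi ->
  xi \in chi ->
  ~ bounded (voronoi chi xi) ->
  hull_adjacent chi xi xp ->
  hull_adjacent chi xi xq ->
  xp != xq ->
  exists u v : pt R,
    u != 0 /\ v != 0 /\
    dot u (xi - xp) = 0 /\ dot v (xi - xq) = 0 /\
    pointed (cone2 u v) /\
    (forall x, dpcir chi xi x <-> exists k, cone2 u v k /\ x = xi + k).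
Proof.
move=> [_ [_ noncol]] xi_chi _ adj_p adj_q pq.
have [np [np0 [np_p supp]]] := hull_adjacent_support xi_chi adj_p.
have [nq [nq0 [nq_q supq]]] := hull_adjacent_support xi_chi adj_q.
have nbp := hull_adjacent_neighbors adj_p np0 np_p supp.
have nbq := hull_adjacent_neighbors adj_q nq0 nq_q supq.
have [flat|vertex] := eqVneq (cross (xi - xp) (xi - xq)) 0.
  have p0 : xi - xp != 0 by rewrite subr_eq0 eq_sym; case: adj_p => _ [].
  have np_q : dot np (xi - xq) = 0 by rewrite (parallel_smul p0 flat) dot_smulr np_p mulr0.
  have [xj [nbj j_in]] :=
    support_inner_neighbor supp (noncollinear_supporting_strict noncol np0 supp).
  exists np, np; do 4!split=> //.
  apply: (dpcir_flat nbp nbq nbj np0 supp np_p j_in flat).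
  exact: (hull_adjacent_opposite adj_p adj_q pq flat).
exists np, nq; do 4!split=> //.
exact: (dpcir_vertex nbp nbq np0 nq0 supp supq np_p nq_q vertex).
Qed.
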